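(* The following two statements are equivalent: (1) For every non-empty set $\mathbb{A}$ and every finite coloring $\varphi:\mathbb{A}^+\to C$, every periodic word $x=u^\omega$ ($u\in\mathbb{A}^+$) admits a $\varphi$-ultra monochromatic factorization. (2) (Hindman's Finite Sums Theorem) For every finite coloring $\varphi:\mathbb{N}^+\to C$ of the positive integers there exist $c\in C$ and an infinite sequence $(n_k)_{k\ge0}$ of positive integers such that $\mathrm{FS}((n_k)_{k\ge0})=\{\sum_{i\in F}n_i : F \text{ a non-empty finite subset of } \mathbb{N}\}\subseteq\varphi^{-1}(c)$.
   Context: $\mathbb{A}^+$ is the free semigroup of non-empty finite words over $\mathbb{A}$; $u^\omega=uuu\cdots$. A finite coloring is a map into a finite non-empty set $C$. $\mathbb{N}^+=\{1,2,\dots\}$. A factorization $x=V_0V_1V_2\cdots$ with all $V_i\in\mathbb{A}^+$ is $\varphi$-ultra monochromatic if there is $c\in C$ such that for all $k\ge1$, all $0\le n_1<\cdots<n_k$ and all permutations $\sigma$ of $\{1,\dots,k\}$, $\varphi(V_{n_{\sigma(1)}}\cdots V_{n_{\sigma(k)}})=c$. *)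

From mathcomp Require Import all_boot.
Set Implicit Arguments. Unset Strict Implicit. Unset Printing Implicit Defensive.

(* The periodic word u^omega for the non-empty word u = a :: w. *)
Definition omega_word (A : Type) (a : A) (w : seq A) : nat -> A :=
  fun k => nth a (a :: w) (k %% size (a :: w)).

(* x = V_0 V_1 V_2 ... with every V_i non-empty: every finite prefix
   V_0 ... V_(n-1) of the factorization is a prefix of x. *)
Definition is_factorization (A : Type) (x : nat -> A) (V : nat -> seq A) : Prop :=
  (forall i, V i <> [::]) /\
  (forall n k, k < size (flatten (map V (iota 0 n))) ->
     x k = nth (x 0) (flatten (map V (iota 0 n))) k).

(* Ultra monochromatic: one colour c for every product V_{n_sigma(1)}...V_{n_sigma(k)}
   with k >= 1, n_1 < ... < n_k, sigma a permutation.  The strictly increasing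
   tuple (n_1,...,n_k) is a non-empty ltn-sorted list s, and its permuted
   rearrangements are the lists t with perm_eq t s. *)
Definition ultra_monochromatic (A : Type) (C : Type) (phi : seq A -> C)
  (V : nat -> seq A) : Prop :=
  exists c : C, forall s : seq nat, s <> [::] -> sorted ltn s ->
    forall t : seq nat, perm_eq t s -> phi (flatten (map V t)) = c.

(* Statement (1).  A colouring of A^+ is modelled as phi : seq A -> C; its
   value on the empty word is never used. *)
Definition Stmt1 : Prop :=
  forall (A : Type), inhabited A ->
  forall (C : finType) (phi : seq A -> C) (a : A) (w : seq A),
  exists V : nat -> seq A,
    is_factorization (omega_word a w) V /\ ultra_monochromatic phi V.

(* Statement (2): Hindman's finite sums theorem.  A colouring of N^+ is modelled
   as phi : nat -> C (value at 0 never used); non-empty finite subsets F of N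
   are non-empty duplicate-free lists. *)
Definition Stmt2 : Prop :=
  forall (C : finType) (phi : nat -> C),
  exists (c : C) (n : nat -> nat),
    (forall k, 0 < n k) /\
    (forall F : seq nat, F <> [::] -> uniq F -> phi (\sum_(i <- F) n i) = c).

From mathcomp Require Import all_boot.
Set Implicit Arguments. Unset Strict Implicit. Unset Printing Implicit Defensive.

(* Both statements say that some colour class contains all "finite sums" of one
   infinite family.  For (1) -> (2), colour the words over a one-letter alphabet
   by their length: an ultra monochromatic factorization of the constant word
   gives blocks whose lengths have monochromatic finite sums.  For (2) -> (1),
   colour m by the colour of u^m: Hindman's sequence (n_k) yields the
   factorization u^omega = u^(n_0) u^(n_1) ..., and any product of distinct
   blocks in any order is u^m with m a finite sum of the n_k. *)

Lemma size_flatten_map (A : Type) (V : nat -> seq A) (F : seq nat) :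
  size (flatten (map V F)) = \sum_(i <- F) size (V i).
Proof. by rewrite size_flatten sumnE /shape -map_comp big_map. Qed.

(* Permutations of strictly increasing tuples are exactly the duplicate-free
   lists. *)
Lemma ultra_monochromaticP (A C : Type) (phi : seq A -> C) (V : nat -> seq A) :
  ultra_monochromatic phi V <->
  exists c, forall F, F <> [::] -> uniq F -> phi (flatten (map V F)) = c.
Proof.
split=> [[c mono] | [c mono]]; exists c.
- move=> F F_nil F_uniq; apply: (mono (sort leq F)).
  + by move=> /(congr1 size); rewrite size_sort => /eqP; rewrite size_eq0 => /eqP.
  + by rewrite ltn_sorted_uniq_leq sort_uniq F_uniq sort_sorted //; apply: leq_total.
  + by rewrite perm_sym perm_sort.
- move=> s s_nil s_sorted t ts; apply: mono.
  + by move=> t_nil; apply: s_nil; apply/nilP; rewrite /nilp -(perm_size ts) t_nil.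
  + by rewrite (perm_uniq ts); exact: (sorted_uniq ltn_trans ltnn s_sorted).
Qed.

Section WordPowers.
Variable A : Type.

Definition word_pow (u : seq A) (m : nat) : seq A := flatten (nseq m u).

Lemma word_powD u m k : word_pow u (m + k) = word_pow u m ++ word_pow u k.
Proof. by rewrite /word_pow nseqD flatten_cat. Qed.

Lemma flatten_map_word_pow u (n : nat -> nat) (F : seq nat) :
  flatten (map (fun i => word_pow u (n i)) F) = word_pow u (\sum_(i <- F) n i).
Proof. by elim: F => [|i F IHF]; rewrite ?big_nil ?big_cons //= IHF word_powD. Qed.

Lemma nth_word_pow x0 u m k :
  k < size (word_pow u m) -> nth x0 (word_pow u m) k = nth x0 u (k %% size u).
Proof.
elim: m k => [|m IHm] k //=; rewrite size_cat nth_cat.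
have [k_lt | u_le] := ltnP k (size u); first by rewrite modn_small.
move=> k_lt; rewrite IHm; last by rewrite ltn_subLR.
by rewrite -{2}(subnK u_le) modnDr.
Qed.

Lemma omega_word_pow_prefix (a : A) (w : seq A) m k :
  k < size (word_pow (a :: w) m) ->
  omega_word a w k = nth (omega_word a w 0) (word_pow (a :: w) m) k.
Proof.
by move=> k_lt; rewrite (set_nth_default a) // nth_word_pow.
Qed.

Lemma omega_word_factorization (a : A) (w : seq A) (n : nat -> nat) :
  (forall i, 0 < n i) ->
  is_factorization (omega_word a w) (fun i => word_pow (a :: w) (n i)).
Proof.
move=> n_gt0; split=> [i | m k].
- by rewrite -(prednK (n_gt0 i)).
- by rewrite flatten_map_word_pow; apply: omega_word_pow_prefix.
Qed.

End WordPowers.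

Lemma Stmt1_Hindman : Stmt1 -> Stmt2.
Proof.
move=> stmt1 C phi.
have [V [[V_nil _] /ultra_monochromaticP [c mono]]] :=
  stmt1 unit (inhabits tt) C (fun s => phi (size s)) tt [::].
exists c, (fun k => size (V k)); split=> [k | F F_nil F_uniq].
- by rewrite lt0n size_eq0; apply/eqP/V_nil.
- by rewrite -size_flatten_map; apply: mono.
Qed.

Lemma Hindman_Stmt1 : Stmt2 -> Stmt1.
Proof.
move=> hindman A _ C phi a w.
have [c [n [n_gt0 mono]]] := hindman C (fun m => phi (word_pow (a :: w) m)).
exists (fun i => word_pow (a :: w) (n i)).
split; first exact: omega_word_factorization.
by apply/ultra_monochromaticP; exists c => F F_nil F_uniq;
  rewrite flatten_map_word_pow; apply: mono.
Qed.

Theorem theorem2p6 : Stmt1 <-> Stmt2.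
Proof. split; [exact: Stmt1_Hindman | exact: Hindman_Stmt1]. Qed.
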